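(* Consider $\min_{x\in\mathbb{R}^p,z\in\mathbb{R}^N}F(x,z):=f(x,z)+g(x)+h(z)$, where: (i) $f$ is differentiable with $M$-Lipschitz joint gradient, i.e. $\|(\nabla_xf(x_1,z_1)-\nabla_xf(x_2,z_2),\nabla_zf(x_1,z_1)-\nabla_zf(x_2,z_2))\|\le M\|(x_1-x_2,z_1-z_2)\|$ for all arguments and some $M>0$, and $g:\mathbb{R}^p\to\mathbb{R}\cup\{\infty\}$, $h:\mathbb{R}^N\to\mathbb{R}\cup\{\infty\}$ are proper, lower semicontinuous and directionally differentiable; (ii) $F$ is bounded below; (iii) $g$ and $h$ are prox-bounded, i.e. $g+\frac\eta2\|\cdot\|^2$ and $h+\frac\eta2\|\cdot\|^2$ are bounded below for some $\eta>0$. Let $\{(x_t,z_t,\eta_t^x,\eta_t^z):t\ge0\}$ be generated by the following algorithm (GPALM), run indefinitely: fix an integer $r\ge1$, $\rho_1,\rho_2>1$, $\sigma_1,\sigma_2\in(0,1)$, $0<\underline\eta\le\overline\eta$, a starting point $(x_0,z_0)$, and $\hat\eta_0^x=\hat\eta_0^z=1$. At iteration $t$, for $l=0,1,2,\dots$ set $\eta_t^x=\rho_1^l\hat\eta_t^x$, $\eta_t^z=\rho_2^l\hat\eta_t^z$ and compute $$x_{t+1}\in\operatorname{Prox}_{g/\eta_t^x}\Big(x_t-\tfrac1{\eta_t^x}\nabla_xf(x_t,z_t)\Big),\quad z_{t+1}\in\operatorname{Prox}_{h/\eta_t^z}\Big(z_t-\tfrac1{\eta_t^z}\nabla_zf(x_{t+1},z_t)\Big),$$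 stopping at the first $l$ for which $$F(x_{t+1},z_{t+1})\le\max\{F(x_{t-r+1},z_{t-r+1}),\dots,F(x_t,z_t)\}-\tfrac{\sigma_1}2\eta_t^x\|x_{t+1}-x_t\|^2-\tfrac{\sigma_2}2\eta_t^z\|z_{t+1}-z_t\|^2$$ (only indices $\ge0$ in the maximum). Then set $$\hat\eta_{t+1}^x=\min\Big\{\overline\eta,\max\Big\{\underline\eta,\tfrac{\langle x_{t+1}-x_t,\nabla_xf(x_{t+1},z_{t+1})-\nabla_xf(x_t,z_t)\rangle}{\|x_{t+1}-x_t\|^2}\Big\}\Big\},$$ $$\hat\eta_{t+1}^z=\min\Big\{\overline\eta,\max\Big\{\underline\eta,\tfrac{\langle z_{t+1}-z_t,\nabla_zf(x_{t+1},z_{t+1})-\nabla_zf(x_{t+1},z_t)\rangle}{\|z_{t+1}-z_t\|^2}\Big\}\Big\}.$$ If the generated sequence $\{(x_t,z_t)\}$ is bounded and $F$ is continuous on a compact set containing the sequence, then any accumulation point of $\{(x_t,z_t)\}$ is a d-stationary point of $F$.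
   Context: $\|\cdot\|$ is the Euclidean norm. $\operatorname{Prox}_{\phi/\eta}(y):=\operatorname{argmin}_u\{\tfrac1\eta\phi(u)+\tfrac12\|u-y\|^2\}$. The directional derivative of $F$ at $(x,z)$ in direction $(d_x,d_z)$ is $F'(x,z;d_x,d_z):=\lim_{\tau\to+0}\frac{F(x+\tau d_x,z+\tau d_z)-F(x,z)}{\tau}$ (possibly $+\infty$). A point $(x^*,z^* )$ is d-stationary for $F$ if $F$ is directionally differentiable there and $F'(x^*,z^*;d_x,d_z)\ge0$ for all $(d_x,d_z)\in\mathbb{R}^p\times\mathbb{R}^N$. *)

(* MathComp + MathComp-Analysis, scalars R : realType,
   vectors of R^p are row vectors 'rV[R]_p, the Euclidean structure is
   defined explicitly below (the library's default norm on matrices is the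
   max-norm, which we only use for the topology, equivalent in finite dim). *)
From HB Require Import structures.
From mathcomp Require Import all_boot all_order all_algebra.
From mathcomp Require Import all_classical all_reals all_analysis.
Set Implicit Arguments. Unset Strict Implicit. Unset Printing Implicit Defensive.
Import Order.TTheory GRing.Theory Num.Theory.
Import numFieldNormedType.Exports.
Local Open Scope classical_set_scope.
Local Open Scope ring_scope.

Section Defs.
Variable R : realType.

Definition dotv (n : nat) (u v : 'rV[R]_n) : R := \sum_(i < n) u ord0 i * v ord0 i.
Definition sqn (n : nat) (u : 'rV[R]_n) : R := dotv u u.
Definition enorm (n : nat) (u : 'rV[R]_n) : R := Num.sqrt (sqn u).

Definition enorm2 (p N : nat) (u : 'rV[R]_p) (v : 'rV[R]_N) : R :=
  Num.sqrt (sqn u + sqn v).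

Local Open Scope ereal_scope.

Definition proper_fun (n : nat) (phi : 'rV[R]_n -> \bar R) : Prop :=
  (forall u, phi u != -oo) /\ (exists u, phi u != +oo).

Definition prox_bounded_with (n : nat) (phi : 'rV[R]_n -> \bar R) (eta : R) : Prop :=
  exists c : R, forall u, c%:E <= phi u + (eta / 2 * sqn u)%:E.

Definition has_dir_deriv (n : nat) (phi : 'rV[R]_n -> \bar R) (u d : 'rV[R]_n)
    (l : \bar R) : Prop :=
  (fun tau : R => (phi (u + tau *: d)%R - phi u) * (tau^-1)%:E) @ 0^'+ --> l.

Definition dir_differentiable_at (n : nat) (phi : 'rV[R]_n -> \bar R) (u : 'rV[R]_n) :=
  forall d, exists l, l != -oo /\ has_dir_deriv phi u d l.

Definition dir_differentiable (n : nat) (phi : 'rV[R]_n -> \bar R) : Prop :=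
  forall u, phi u \is a fin_num -> dir_differentiable_at phi u.

Definition in_prox (n : nat) (phi : 'rV[R]_n -> \bar R) (eta : R) (y u : 'rV[R]_n) :=
  forall v, phi u * (eta^-1)%:E + (2^-1 * sqn (u - y)%R)%:E
            <= phi v * (eta^-1)%:E + (2^-1 * sqn (v - y)%R)%:E.

Definition has_dir_deriv2 (p N : nat) (Phi : 'rV[R]_p -> 'rV[R]_N -> \bar R)
    (x : 'rV[R]_p) (z : 'rV[R]_N) (dx : 'rV[R]_p) (dz : 'rV[R]_N) (l : \bar R) :=
  (fun tau : R => (Phi (x + tau *: dx)%R (z + tau *: dz)%R - Phi x z) * (tau^-1)%:E)
    @ 0^'+ --> l.

Definition d_stationary (p N : nat) (Phi : 'rV[R]_p -> 'rV[R]_N -> \bar R)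
    (x : 'rV[R]_p) (z : 'rV[R]_N) :=
  forall dx dz, exists l, has_dir_deriv2 Phi x z dx dz l /\ 0 <= l.

(* maximum of F(x_i,z_i) over i = max(0,t-r+1), ..., t *)
Definition nm_ref (p N : nat) (Phi : 'rV[R]_p -> 'rV[R]_N -> \bar R)
    (x : nat -> 'rV[R]_p) (z : nat -> 'rV[R]_N) (r t : nat) : \bar R :=
  \big[maxe/-oo]_((t.+1 - r)%N <= i < t.+1) Phi (x i) (z i).

Definition gpalm_test (p N : nat) (Phi : 'rV[R]_p -> 'rV[R]_N -> \bar R)
    (x : nat -> 'rV[R]_p) (z : nat -> 'rV[R]_N) (r t : nat)
    (sigma1 sigma2 etx etz : R) (xn : 'rV[R]_p) (zn : 'rV[R]_N) : Prop :=
  Phi xn zn <= nm_ref Phi x z r t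
               - (sigma1 / 2 * etx * sqn (xn - x t)%R)%:E
               - (sigma2 / 2 * etz * sqn (zn - z t)%R)%:E.

Local Close Scope ereal_scope.

Definition clip (lo hi a : R) : R := Num.min hi (Num.max lo a).

(* For iteration t,
   L t is the first accepted line-search index l, and (xtr t l, ztr t l)
   are the trial points computed for l = 0, ..., L t; the trial points for
   l < L t fail the test and the one for l = L t passes and becomes
   (x (t+1), z (t+1)).  ehx/ehz are the hat-eta's; the actual step
   parameters are eta_t^x = rho1^(L t) * ehx t, eta_t^z = rho2^(L t) * ehz t. *)
Definition GPALM_run (p N : nat)
    (gx : 'rV[R]_p -> 'rV[R]_N -> 'rV[R]_p) (gz : 'rV[R]_p -> 'rV[R]_N -> 'rV[R]_N)
    (g : 'rV[R]_p -> \bar R) (h : 'rV[R]_N -> \bar R)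
    (Phi : 'rV[R]_p -> 'rV[R]_N -> \bar R)
    (r : nat) (rho1 rho2 sigma1 sigma2 etalo etahi : R)
    (x : nat -> 'rV[R]_p) (z : nat -> 'rV[R]_N) (ehx ehz : nat -> R)
    (L : nat -> nat) (xtr : nat -> nat -> 'rV[R]_p) (ztr : nat -> nat -> 'rV[R]_N)
  : Prop :=
  (ehx 0%N = 1 /\ ehz 0%N = 1) /\
  [/\
   (forall t l, (l <= L t)%N ->
      in_prox g (rho1 ^+ l * ehx t)
        (x t - (rho1 ^+ l * ehx t)^-1 *: gx (x t) (z t)) (xtr t l)
      /\ in_prox h (rho2 ^+ l * ehz t)
        (z t - (rho2 ^+ l * ehz t)^-1 *: gz (xtr t l) (z t)) (ztr t l)),
   (forall t l, (l < L t)%N ->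
      ~ gpalm_test Phi x z r t sigma1 sigma2 (rho1 ^+ l * ehx t) (rho2 ^+ l * ehz t)
          (xtr t l) (ztr t l)),
   (forall t, gpalm_test Phi x z r t sigma1 sigma2
          (rho1 ^+ L t * ehx t) (rho2 ^+ L t * ehz t) (x t.+1) (z t.+1)),
   (forall t, x t.+1 = xtr t (L t) /\ z t.+1 = ztr t (L t)) &
   (forall t,
      ehx t.+1 = clip etalo etahi
        (dotv (x t.+1 - x t) (gx (x t.+1) (z t.+1) - gx (x t) (z t))
           / sqn (x t.+1 - x t))
      /\ ehz t.+1 = clip etalo etahi
        (dotv (z t.+1 - z t) (gz (x t.+1) (z t.+1) - gz (x t.+1) (z t))
           / sqn (z t.+1 - z t)))].

End Defs.

(* Every GPALM step is a pair of proximal-gradient steps, so the three-point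
   inequality of the prox and the descent lemma for the M-Lipschitz gradient give
     F(x', z') <= F(x, z) - (eta^x/2 - M) |x' - x|^2 - (eta^z/2 - M) |z' - z|^2.
   Hence the line search stops once eta (1 - sigma) >= 2 M, and the step parameters
   stay bounded.  The nonmonotone acceptance rule makes the window maxima W_t of F
   nonincreasing, hence convergent as F is bounded below, and the argument of
   Grippo, Lampariello and Lucidi, stepping back from the indices attaining W_t,
   shows that the squared steps tend to 0.  Along a subsequence converging to
   (xs, zs) the previous iterates converge as well; passing to the limit in the prox
   inequalities, with lower semicontinuity, shows that -grad_x f(xs, zs) and
   -grad_z f(xs, zs) are proximal subgradients of g and h at xs and zs, which gives
   F'(xs, zs; d) >= 0 in every direction d. *)

From HB Require Import structures.
From mathcomp Require Import all_boot all_order all_algebra.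
From mathcomp Require Import all_classical all_reals all_analysis.
From mathcomp Require Import ring lra zify.
Import Order.TTheory GRing.Theory Num.Theory.
Import numFieldNormedType.Exports.
Local Open Scope classical_set_scope.
Local Open Scope ring_scope.
Set Implicit Arguments. Unset Strict Implicit. Unset Printing Implicit Defensive.

Section Euclidean.
Variables (R : realType) (n : nat).
Implicit Types (u v w : 'rV[R]_n) (a : R).

Lemma dotvC u v : dotv u v = dotv v u.
Proof. by apply: eq_bigr => i _; rewrite mulrC. Qed.

Lemma dotvDl u v w : dotv (u + v) w = dotv u w + dotv v w.
Proof. by rewrite /dotv -big_split; apply: eq_bigr => i _; rewrite mxE mulrDl. Qed.

Lemma dotvZl a u v : dotv (a *: u) v = a * dotv u v.
Proof. by rewrite /dotv mulr_sumr; apply: eq_bigr => i _; rewrite mxE mulrA. Qed.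

Lemma dotvNl u v : dotv (- u) v = - dotv u v.
Proof. by rewrite -scaleN1r dotvZl mulN1r. Qed.

Lemma dotvBl u v w : dotv (u - v) w = dotv u w - dotv v w.
Proof. by rewrite dotvDl dotvNl. Qed.

Lemma dotvDr u v w : dotv w (u + v) = dotv w u + dotv w v.
Proof. by rewrite dotvC dotvDl !(dotvC w). Qed.

Lemma dotvZr a u v : dotv v (a *: u) = a * dotv v u.
Proof. by rewrite dotvC dotvZl dotvC. Qed.

Lemma dotvNr u v : dotv v (- u) = - dotv v u.
Proof. by rewrite dotvC dotvNl dotvC. Qed.

Lemma dotvBr u v w : dotv w (u - v) = dotv w u - dotv w v.
Proof. by rewrite dotvDr dotvNr. Qed.

Lemma dotv0l u : dotv 0 u = 0.
Proof. by rewrite /dotv big1 // => i _; rewrite mxE mul0r. Qed.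

Lemma dotv0r u : dotv u 0 = 0.
Proof. by rewrite dotvC dotv0l. Qed.

Lemma sqn_ge0 u : 0 <= sqn u.
Proof. by apply: sumr_ge0 => i _; rewrite -expr2 sqr_ge0. Qed.

Lemma sqn0 : sqn (0 : 'rV[R]_n) = 0.
Proof. exact: dotv0l. Qed.

Lemma sqnD u v : sqn (u + v) = sqn u + 2 * dotv u v + sqn v.
Proof. rewrite /sqn !dotvDl !dotvDr (dotvC v u); ring. Qed.

Lemma sqnB u v : sqn (u - v) = sqn u - 2 * dotv u v + sqn v.
Proof. rewrite /sqn !dotvBl !dotvBr (dotvC v u); ring. Qed.

Lemma sqnZ a u : sqn (a *: u) = a ^+ 2 * sqn u.
Proof. rewrite /sqn dotvZl dotvZr; ring. Qed.

Lemma young_dotv u v a : 0 < a -> 2 * dotv u v <= a * sqn u + a^-1 * sqn v.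
Proof.
move=> a_gt0; have := sqn_ge0 (a *: u - v); rewrite sqnB sqnZ dotvZl => sq_ge0.
have : 0 <= a^-1 * (a ^+ 2 * sqn u - 2 * (a * dotv u v) + sqn v).
  by rewrite mulr_ge0 // invr_ge0 ltW.
suff -> : a^-1 * (a ^+ 2 * sqn u - 2 * (a * dotv u v) + sqn v) =
          a * sqn u + a^-1 * sqn v - 2 * dotv u v by rewrite subr_ge0.
by field; rewrite gt_eqF.
Qed.

Lemma normr_le_enorm u : `|u| <= enorm u.
Proof.
have -> : `|u| = mx_norm u by [].
rewrite mx_normrE; apply: bigmax_le => [|[i j] _ /=]; first exact: sqrtr_ge0.
rewrite -sqrtr_sqr ler_sqrt ?sqn_ge0 // [i]ord1 /sqn /dotv (bigD1 j) //= -expr2 lerDl.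
by apply: sumr_ge0 => k _; rewrite -expr2 sqr_ge0.
Qed.

End Euclidean.

Section EuclideanConvergence.
Variables (R : realType) (n : nat) (T : Type) (F : set_system T).
Context {FF : Filter F}.
Implicit Types (u v : T -> 'rV[R]_n) (a b : 'rV[R]_n).

Lemma cvg_dotv u v a b : u @ F --> a -> v @ F --> b ->
  (fun k => dotv (u k) (v k)) @ F --> dotv a b.
Proof.
move=> ua vb; apply: cvg_big => [|i _]; first exact: add_continuous.
have entry_cvg (w : T -> 'rV[R]_n) (c : 'rV[R]_n) :
    w @ F --> c -> (fun k => w k ord0 i) @ F --> c ord0 i.
  by move=> wc; exact: (cvg_comp _ _ wc (@coord_continuous R 1 n ord0 i c)).
by apply: cvgM; apply: entry_cvg.
Qed.

Lemma cvg_sqnB0P u a : (fun k => sqn (u k - a)) @ F --> 0 <-> u @ F --> a.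
Proof.
split=> [sqn_cvg0|ua]; last first.
  have uBa : (fun k => u k - a) @ F --> (0 : 'rV[R]_n).
    by rewrite -(subrr a); apply: cvgB => //; exact: cvg_cst.
  by rewrite -(dotv0l (0 : 'rV[R]_n)); exact: cvg_dotv.
apply/subr_cvg0/norm_cvg0P; apply: (@squeeze_cvgr _ _ _ _ (cst 0) (fun k => enorm (u k - a))).
- by near=> k; rewrite normr_ge0 normr_le_enorm.
- exact: cvg_cst.
- rewrite -sqrtr0; exact: (cvg_comp _ _ sqn_cvg0 (@sqrt_continuous R 0)).
Unshelve. all: by end_near.
Qed.

End EuclideanConvergence.

Lemma lower_semicontinuous_cvg_le (R : realType) (X : topologicalType) (T : Type)
    (F : set_system T) {PF : ProperFilter F}
    (phi : X -> \bar R) (u : T -> X) (us : X) (b : T -> R) (l : R) :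
  lower_semicontinuous phi -> u @ F --> us -> b @ F --> l ->
  (\forall k \near F, (phi (u k) <= (b k)%:E)%E) -> (phi us <= l%:E)%E.
Proof.
move=> lsc_phi u_us b_l phi_le_b; apply/lee_addgt0Pr => e e_gt0.
rewrite -EFinD leNgt; apply/negP => /lsc_phi[V V_us phi_gt].
have b_lt : \forall k \near F, b k < l + e by apply: cvgr_lt b_l _ _; rewrite ltrDl.
have Vu : \forall k \near F, V (u k) := u_us _ V_us.
have [k [[Vk phi_le] b_lt_k]] := filter_ex (filterI (filterI Vu phi_le_b) b_lt).
by have := lt_le_trans (phi_gt _ Vk) phi_le; rewrite lte_fin ltNge ltW.
Qed.

Section Prox.
Variables (R : realType) (n : nat).
Implicit Types (phi : 'rV[R]_n -> \bar R) (u v w y G : 'rV[R]_n) (eta E : R).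

Lemma in_prox_fin_num phi eta y u : proper_fun phi -> 0 < eta ->
  in_prox phi eta y u -> phi u \is a fin_num.
Proof.
move=> [phi_gtNy [v phi_v]] eta_gt0 /(_ v); rewrite fin_numE phi_gtNy /=.
case: (phi u) => [a| |] //=.
by case: (phi v) phi_v (phi_gtNy v) => [b| |] //= _ _; rewrite gt0_mulye ?lte_fin ?invr_gt0.
Qed.

Lemma in_prox_le phi eta w G u v a b : 0 < eta ->
  in_prox phi eta (w - eta^-1 *: G) u -> phi u = a%:E -> phi v = b%:E ->
  a + dotv G (u - w) + eta / 2 * sqn (u - w) <= b + dotv G (v - w) + eta / 2 * sqn (v - w).
Proof.
move=> eta_gt0 /(_ v) prox_v phi_u phi_v.
move: prox_v; rewrite phi_u phi_v -!EFinM -!EFinD lee_fin.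
have sqn_shift y : sqn (y - (w - eta^-1 *: G)) =
    sqn (y - w) + 2 * (eta^-1 * dotv G (y - w)) + eta^-1 ^+ 2 * sqn G.
  by rewrite opprD opprK addrA [LHS]sqnD sqnZ dotvZr dotvC.
rewrite !sqn_shift => /(ler_wpM2l (ltW eta_gt0)).
have scale c d s : eta * (c * eta^-1 + 2^-1 * (s + 2 * (eta^-1 * d) + eta^-1 ^+ 2 * sqn G))
    = c + d + eta / 2 * s + eta^-1 / 2 * sqn G by field; rewrite gt_eqF.
by rewrite !scale lerD2r.
Qed.

Definition prox_subgradient phi E u G :=
  forall v, (phi u + (dotv G (v - u) - E / 2 * sqn (v - u))%:E <= phi v)%E.

Lemma prox_subgradient_fin_num phi E u G : proper_fun phi ->
  prox_subgradient phi E u G -> phi u \is a fin_num.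
Proof.
move=> [phi_gtNy [v phi_v]] /(_ v); rewrite fin_numE phi_gtNy /=.
by case: (phi u) => [a| |] //=; case: (phi v) phi_v.
Qed.

Lemma in_prox_cvg_prox_subgradient phi E (u w Gs : nat -> 'rV[R]_n) (eta : nat -> R) us G :
  proper_fun phi -> lower_semicontinuous phi ->
  (forall k, 0 < eta k) -> (\forall k \near \oo, eta k <= E) ->
  (forall k, in_prox phi (eta k) (w k - (eta k)^-1 *: Gs k) (u k)) ->
  u @ \oo --> us -> w @ \oo --> us -> Gs @ \oo --> G ->
  prox_subgradient phi E us (- G).
Proof.
move=> Pphi lsc_phi eta_gt0 eta_le prox_u u_us w_us Gs_G v.
case phi_v : (phi v) => [b| |]; [|exact: leey|by have := Pphi.1 v; rewrite phi_v].
pose bound k := b + dotv (Gs k) (v - u k) + E / 2 * sqn (v - w k).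
have phi_le : \forall k \near \oo, (phi (u k) <= (bound k)%:E)%E.
  near=> k; have phi_uk := in_prox_fin_num Pphi (eta_gt0 k) (prox_u k).
  have := in_prox_le (eta_gt0 k) (prox_u k) (esym (fineK phi_uk)) phi_v.
  have eta_le_E : eta k <= E by near: k.
  have : 0 <= eta k / 2 * sqn (u k - w k) by rewrite mulr_ge0 ?sqn_ge0 ?divr_ge0 ?ltW.
  have : eta k / 2 * sqn (v - w k) <= E / 2 * sqn (v - w k).
    by rewrite ler_wpM2r ?sqn_ge0 ?ler_pM2r.
  by rewrite -(fineK phi_uk) lee_fin /bound !dotvBr; lra.
have bound_cvg : bound @ \oo --> b + dotv G (v - us) + E / 2 * sqn (v - us).
  apply: cvgD; first apply: cvgD; first exact: cvg_cst.
    by apply: cvg_dotv => //; apply: cvgB => //; exact: cvg_cst.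
  by apply: cvgM; [exact: cvg_cst | apply: cvg_dotv; apply: cvgB => //; exact: cvg_cst].
have : (phi us <= (b + dotv G (v - us) + E / 2 * sqn (v - us))%:E)%E.
  exact: lower_semicontinuous_cvg_le lsc_phi u_us bound_cvg phi_le.
case: (phi us) => [a| |] phi_us_le.
- by move: phi_us_le; rewrite -EFinD !lee_fin dotvNl; lra.
- by move: phi_us_le; rewrite leye_eq.
- by rewrite addNye leNye.
Unshelve. all: by end_near.
Qed.

Lemma prox_subgradient_dir_deriv phi E u G d : proper_fun phi -> dir_differentiable phi ->
  prox_subgradient phi E u G ->
  exists l, [/\ l != -oo%E, has_dir_deriv phi u d l & ((dotv G d)%:E <= l)%E].
Proof.
move=> Pphi dd_phi sub_G; have phi_u := prox_subgradient_fin_num Pphi sub_G.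
have [l [l_gtNy dl]] := dd_phi u phi_u d; exists l; split => //.
pose lo t := dotv G d - E / 2 * t * sqn d.
have lo_cvg : (lo t)%:E @[t --> 0^'+] --> (dotv G d)%:E.
  apply: cvg_EFin; first by near=> t.
  have -> : dotv G d = lo 0 by rewrite /lo mulr0 mul0r subr0.
  apply: cvg_at_right_filter; apply: cvgB; first exact: cvg_cst.
  by apply: cvgM; [apply: cvgM; [exact: cvg_cst | exact: cvg_id] | exact: cvg_cst].
apply: (lee_cvg_to lo_cvg dl); near=> t.
have t_gt0 : 0 < t by near: t; exact: nbhs_right_gt.
have := sub_G (u + t *: d).
have -> : u + t *: d - u = t *: d by rewrite addrC addKr.
rewrite dotvZr sqnZ -(fineK phi_u).
case: (phi (u + t *: d)) (Pphi.1 (u + t *: d)) => [b| |] // _.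
  rewrite -EFinD -EFinB -EFinM !lee_fin => le_b.
  rewrite ler_pdivlMr // /lo.
  have -> : (dotv G d - E / 2 * t * sqn d) * t =
      fine (phi u) + (t * dotv G d - E / 2 * (t ^+ 2 * sqn d)) - fine (phi u) by ring.
  lra.
by move=> _; rewrite addye // gt0_mulye ?leey // lte_fin invr_gt0.
Unshelve. all: by end_near.
Qed.
End Prox.

Lemma line_is_derive (R : realType) (V : normedModType R) (f : V -> R) (w d : V) (t : R) :
  differentiable f (w + t *: d) ->
  is_derive t 1 (fun s : R => f (w + s *: d)) ('d f (w + t *: d) d).
Proof.
move=> df; have quotE : (fun s : R => s^-1 *: (f (w + (s *: 1 + t) *: d) - f (w + t *: d))) =
    (fun s : R => s^-1 *: ((f \o shift (w + t *: d)) (s *: d) - f (w + t *: d))).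
  by apply: funext => s /=; rewrite [s *: 1]mulr1 scalerDl addrCA.
apply: DeriveDef; first by rewrite /derivable quotE; exact: diff_derivable.
by rewrite /derive quotE -/(derive f _ d) deriveE.
Qed.

Definition objective (R : realType) (p N : nat) (f : 'rV[R]_p * 'rV[R]_N -> R)
    (g : 'rV[R]_p -> \bar R) (h : 'rV[R]_N -> \bar R) (u : 'rV[R]_p) (v : 'rV[R]_N) : \bar R :=
  ((f (u, v))%:E + g u + h v)%E.

Lemma objective_fin (R : realType) (p N : nat) (f : 'rV[R]_p * 'rV[R]_N -> R)
    (g : 'rV[R]_p -> \bar R) (h : 'rV[R]_N -> \bar R) u v :
  g u \is a fin_num -> h v \is a fin_num ->
  objective f g h u v = (f (u, v) + fine (g u) + fine (h v))%:E.
Proof. by rewrite /objective; case: (g u) => // a; case: (h v). Qed.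

Section DStationarity.
Variables (R : realType) (p N : nat) (f : 'rV[R]_p * 'rV[R]_N -> R).
Variables (g : 'rV[R]_p -> \bar R) (h : 'rV[R]_N -> \bar R).
Variables (xs : 'rV[R]_p) (zs : 'rV[R]_N).
Hypothesis f_diff : differentiable f (xs, zs).

Lemma objective_has_dir_deriv2 dx dz lg lh :
  proper_fun g -> proper_fun h -> g xs \is a fin_num -> h zs \is a fin_num ->
  lg != -oo%E -> lh != -oo%E ->
  has_dir_deriv g xs dx lg -> has_dir_deriv h zs dz lh ->
  has_dir_deriv2 (objective f g h) xs zs dx dz (('d f (xs, zs) (dx, dz))%:E + lg + lh)%E.
Proof.
move=> Pg Ph g_xs h_zs lg_gtNy lh_gtNy dg dh.
have dq : (fun t : R => t^-1 *: ((f \o shift (xs, zs)) (t *: (dx, dz)) - f (xs, zs)))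
    @ 0^' --> 'd f (xs, zs) (dx, dz) by rewrite -deriveE //; exact: diff_derivable.
have df : (fun t : R => (t^-1 *: ((f \o shift (xs, zs)) (t *: (dx, dz)) - f (xs, zs)))%:E)
    @ 0^'+ --> ('d f (xs, zs) (dx, dz))%:E.
  apply: cvg_EFin; first by near=> t.
  exact: cvg_dnbhs_at_right dq.
have def_fg : (('d f (xs, zs) (dx, dz))%:E +? lg)%E by exact: fin_num_adde_defr.
have def_fgh : (('d f (xs, zs) (dx, dz))%:E + lg +? lh)%E.
  by apply: ltninfty_adde_def; rewrite inE /= ltNye //; case: lg lg_gtNy {dg def_fg}.
apply: cvg_trans (near_eq_cvg _) (cvgeD def_fgh (cvgeD def_fg df dg) dh).
near=> t; have t_gt0 : 0 < t by near: t; exact: nbhs_right_gt.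
rewrite /objective /= (addrC (t *: _)) -(fineK g_xs) -(fineK h_zs).
move: (fine (g xs)) (fine (h zs)) => a b.
have t_inv_gt0 : (0 < (t^-1)%:E)%E by rewrite lte_fin invr_gt0.
case: (g (xs + t *: dx)) (Pg.1 (xs + t *: dx)) => [c| |] // _;
  case: (h (zs + t *: dz)) (Ph.1 (zs + t *: dz)) => [d| |] // _.
- rewrite -!EFinD -?EFinB -!EFinM; congr (_%:E); rewrite /GRing.scale /=; ring.
- by rewrite gt0_mulye // addey.
- by rewrite gt0_mulye // addey // addye.
- by rewrite gt0_mulye // addey // addye.
Unshelve. all: by end_near.
Qed.

Lemma prox_subgradients_d_stationary Gx Gz E :
  (forall dx dz, 'd f (xs, zs) (dx, dz) = dotv Gx dx + dotv Gz dz) ->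
  proper_fun g -> proper_fun h -> dir_differentiable g -> dir_differentiable h ->
  prox_subgradient g E xs (- Gx) -> prox_subgradient h E zs (- Gz) ->
  d_stationary (objective f g h) xs zs.
Proof.
move=> df_grad Pg Ph dd_g dd_h sub_g sub_h dx dz.
have [lg [lg_gtNy dg lg_ge]] := prox_subgradient_dir_deriv dx Pg dd_g sub_g.
have [lh [lh_gtNy dh lh_ge]] := prox_subgradient_dir_deriv dz Ph dd_h sub_h.
eexists; split.
  apply: objective_has_dir_deriv2 dg dh => //; exact: prox_subgradient_fin_num.
apply: le_trans (leeD (leeD (lexx _) lg_ge) lh_ge).
by rewrite -!EFinD lee_fin df_grad !dotvNl; lra.
Qed.

End DStationarity.

Section LipschitzGradient.
Variables (R : realType) (p N : nat) (f : 'rV[R]_p * 'rV[R]_N -> R).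
Variables (gx : 'rV[R]_p -> 'rV[R]_N -> 'rV[R]_p) (gz : 'rV[R]_p -> 'rV[R]_N -> 'rV[R]_N).
Variable M : R.
Hypothesis f_diff : forall u v, differentiable f (u, v).
Hypothesis f_grad : forall u v du dv,
  'd f (u, v) (du, dv) = dotv (gx u v) du + dotv (gz u v) dv.
Hypothesis M_gt0 : 0 < M.
Hypothesis grad_lip : forall u1 v1 u2 v2,
  enorm2 (gx u1 v1 - gx u2 v2) (gz u1 v1 - gz u2 v2) <= M * enorm2 (u1 - u2) (v1 - v2).

Lemma grad_lip_sqn u1 v1 u2 v2 :
  sqn (gx u1 v1 - gx u2 v2) + sqn (gz u1 v1 - gz u2 v2) <=
  M ^+ 2 * (sqn (u1 - u2) + sqn (v1 - v2)).
Proof.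
have sum_ge0 (a : 'rV[R]_p) (b : 'rV[R]_N) : 0 <= sqn a + sqn b by rewrite addr_ge0 ?sqn_ge0.
rewrite -[X in X <= _]sqr_sqrtr ?sum_ge0 // -[X in _ <= _ * X]sqr_sqrtr ?sum_ge0 //.
rewrite -exprMn lerXn2r ?nnegrE ?mulr_ge0 ?sqrtr_ge0 ?(ltW M_gt0) //.
exact: grad_lip u1 v1 u2 v2.
Qed.

Lemma descent_lemma u v du dv :
  f (u + du, v + dv) <= f (u, v) + dotv (gx u v) du + dotv (gz u v) dv + M * (sqn du + sqn dv).
Proof.
pose w : 'rV[R]_p * 'rV[R]_N := (u, v); pose d : 'rV[R]_p * 'rV[R]_N := (du, dv).
pose phi (s : R) := f (w + s *: d).
have phiE s : phi s = f (u + s *: du, v + s *: dv) by [].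
have line_derive (t : R) : is_derive t 1 phi ('d f (w + t *: d) d).
  exact/line_is_derive/f_diff.
have [c] : exists2 c, c \in `[0, 1] & phi 1 - phi 0 = 'd f (w + c *: d) d * (1 - 0).
  apply: MVT_segment => //; apply: derivable_within_continuous => t _.
  exact: (@ex_derive _ _ _ _ _ _ _ (line_derive t)).
rewrite in_itv /= => /andP[c_ge0 c_le1].
set uc := u + c *: du; set vc := v + c *: dv.
rewrite !phiE !scale1r !scale0r !addr0 subr0 mulr1 (_ : w + c *: d = (uc, vc)) // f_grad => mvt.
have Minv_gt0 : 0 < M^-1 by rewrite invr_gt0.
have young_x := young_dotv (gx uc vc - gx u v) du Minv_gt0.
have young_z := young_dotv (gz uc vc - gz u v) dv Minv_gt0.
rewrite invrK !dotvBl in young_x young_z.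
have lip :
    M^-1 * (sqn (gx uc vc - gx u v) + sqn (gz uc vc - gz u v)) <= M * (sqn du + sqn dv).
  rewrite -ler_pdivlMl ?invr_gt0 // invrK.
  apply: le_trans (grad_lip_sqn uc vc u v) _.
  rewrite /uc /vc !(addrC _ (c *: _)) !addrK !sqnZ -mulrDr [X in _ <= X]mulrA -expr2.
  by rewrite ler_wpM2l ?sqr_ge0 // ler_piMl ?addr_ge0 ?sqn_ge0 // expr_le1.
move: mvt lip; rewrite !mulrDr; lra.
Qed.

Lemma cvg_grad (T : Type) (F : set_system T) {FF : Filter F}
    (a : T -> 'rV[R]_p) (b : T -> 'rV[R]_N) xs zs :
  a @ F --> xs -> b @ F --> zs ->
  (fun k => gx (a k) (b k)) @ F --> gx xs zs /\ (fun k => gz (a k) (b k)) @ F --> gz xs zs.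
Proof.
move=> /cvg_sqnB0P a_xs /cvg_sqnB0P b_zs.
have bound_cvg0 : (fun k => M ^+ 2 * (sqn (a k - xs) + sqn (b k - zs))) @ F --> 0.
  rewrite -(mulr0 (M ^+ 2)) -(addr0 0).
  by apply: cvgM; [exact: cvg_cst | exact: cvgD].
by split; apply/cvg_sqnB0P; apply: (squeeze_cvgr _ (cvg_cst 0) bound_cvg0); near=> k;
  have := grad_lip_sqn (a k) (b k) xs zs; rewrite sqn_ge0 /=;
  have := sqn_ge0 (gx (a k) (b k) - gx xs zs); have := sqn_ge0 (gz (a k) (b k) - gz xs zs); lra.
Unshelve. all: by end_near.
Qed.

Lemma palm_step_decrease g h x0 z0 ex ez u v : proper_fun g -> proper_fun h ->
  0 < ex -> 0 < ez -> g x0 \is a fin_num -> h z0 \is a fin_num ->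
  in_prox g ex (x0 - ex^-1 *: gx x0 z0) u -> in_prox h ez (z0 - ez^-1 *: gz u z0) v ->
  (objective f g h u v <= objective f g h x0 z0
     - ((ex / 2 - M) * sqn (u - x0))%:E - ((ez / 2 - M) * sqn (v - z0))%:E)%E.
Proof.
move=> Pg Ph ex_gt0 ez_gt0 g_x0 h_z0 prox_u prox_v.
have g_u := in_prox_fin_num Pg ex_gt0 prox_u; have h_v := in_prox_fin_num Ph ez_gt0 prox_v.
rewrite !objective_fin // -!EFinB lee_fin.
have := in_prox_le ex_gt0 prox_u (esym (fineK g_u)) (esym (fineK g_x0)).
have := in_prox_le ez_gt0 prox_v (esym (fineK h_v)) (esym (fineK h_z0)).
rewrite !subrr !dotv0r sqn0 !mulr0 !addr0.
have := descent_lemma x0 z0 (u - x0) 0; have := descent_lemma u z0 0 (v - z0).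
rewrite !addr0 !(addrC x0) !(addrC z0) !subrK !dotv0r !sqn0 !mulr0 !addr0 !add0r !mulrBl.
lra.
Qed.

Lemma limit_point_d_stationary g h (ux wx : nat -> 'rV[R]_p) (uz wz : nat -> 'rV[R]_N)
    (etax etaz : nat -> R) E xs zs :
  proper_fun g -> proper_fun h -> lower_semicontinuous g -> lower_semicontinuous h ->
  dir_differentiable g -> dir_differentiable h ->
  (forall k, 0 < etax k) -> (forall k, 0 < etaz k) ->
  (\forall k \near \oo, etax k <= E /\ etaz k <= E) ->
  (forall k, in_prox g (etax k) (wx k - (etax k)^-1 *: gx (wx k) (wz k)) (ux k)) ->
  (forall k, in_prox h (etaz k) (wz k - (etaz k)^-1 *: gz (ux k) (wz k)) (uz k)) ->
  ux @ \oo --> xs -> uz @ \oo --> zs -> wx @ \oo --> xs -> wz @ \oo --> zs ->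
  d_stationary (objective f g h) xs zs.
Proof.
move=> Pg Ph lsc_g lsc_h dd_g dd_h etax_gt0 etaz_gt0 eta_le prox_x prox_z
  ux_xs uz_zs wx_xs wz_zs.
have etax_le : \forall k \near \oo, etax k <= E by move: eta_le; apply: filterS => k [].
have etaz_le : \forall k \near \oo, etaz k <= E by move: eta_le; apply: filterS => k [].
have [gx_cvg _] := cvg_grad wx_xs wz_zs.
have [_ gz_cvg] := cvg_grad ux_xs wz_zs.
apply: (prox_subgradients_d_stationary (f_diff xs zs) (f_grad xs zs) Pg Ph dd_g dd_h).
- exact: in_prox_cvg_prox_subgradient Pg lsc_g etax_gt0 etax_le prox_x ux_xs wx_xs gx_cvg.
- exact: in_prox_cvg_prox_subgradient Ph lsc_h etaz_gt0 etaz_le prox_z uz_zs wz_zs gz_cvg.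
Qed.

End LipschitzGradient.

Section NonmonotoneDescent.
Variables (R : realType) (Fv W D : nat -> R) (r T0 : nat) (c M b : R).
Hypothesis r_gt0 : (0 < r)%N.
Hypothesis c_gt0 : 0 < c.
Hypothesis window_le : forall t, (T0 <= t)%N ->
  forall i, (t.+1 - r <= i <= t)%N -> Fv i <= W t.
Hypothesis window_attained : forall t, (T0 <= t)%N ->
  exists2 i, (t.+1 - r <= i <= t)%N & Fv i = W t.
Hypothesis sufficient_decrease : forall t, (T0 <= t)%N -> Fv t.+1 <= W t - c * D t.
Hypothesis bounded_increase : forall t, (T0 <= t)%N -> Fv t.+1 <= Fv t + M * D t.
Hypothesis D_ge0 : forall t, 0 <= D t.
Hypothesis Fv_ge : forall t, (T0 <= t)%N -> b <= Fv t.

Lemma window_max_nonincreasing t : (T0 <= t)%N -> W t.+1 <= W t.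
Proof.
move=> T0_le_t; have [i i_win <-] := window_attained (leqW T0_le_t).
have [->|i_neq] := eqVneq i t.+1.
  apply: le_trans (sufficient_decrease T0_le_t) _.
  by rewrite lerBlDr lerDl mulr_ge0 // ltW.
by apply: window_le => //; move: i_win i_neq => /andP[? ?] /eqP; lia.
Qed.

Let Wlim := lim (W @ \oo).

Lemma window_max_cvg : W @ \oo --> Wlim.
Proof.
have Wshift_cvg : (fun t => W (t + T0)%N) @ \oo --> inf (range (fun t => W (t + T0)%N)).
  apply: nonincreasing_cvgn.
    apply: homo_leq => [//|y x z yx zy|t]; first exact: le_trans zy yx.
    exact: window_max_nonincreasing (leq_addl _ _).
  exists b => _ [t _ <-]; apply: le_trans (Fv_ge (leq_addl t T0)) _.
  by apply: window_le; [exact: leq_addl | apply/andP; split; lia].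
by apply/cvg_ex; exists (inf (range (fun t => W (t + T0)%N))); rewrite -(cvg_shiftn T0).
Qed.

Lemma window_step_back (s : nat -> nat) : s @ \oo --> \oo ->
  (fun k => Fv (s k).+1) @ \oo --> Wlim ->
  (fun k => D (s k)) @ \oo --> 0 /\ (fun k => Fv (s k)) @ \oo --> Wlim.
Proof.
move=> s_oo Fv_next; have W_s := cvg_comp _ _ s_oo window_max_cvg.
have s_ge : \forall k \near \oo, (T0 <= s k)%N := s_oo _ (nbhs_infty_ge T0).
have D_s : (fun k => D (s k)) @ \oo --> 0.
  have gap_cvg0 : (fun k => (W (s k) - Fv (s k).+1) / c) @ \oo --> 0.
    rewrite -(mul0r c^-1) -(subrr Wlim).
    by apply: cvgM; [exact: cvgB | exact: cvg_cst].
  apply: (squeeze_cvgr _ (cvg_cst 0) gap_cvg0); near=> k.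
  have T0_le : (T0 <= s k)%N by near: k.
  rewrite D_ge0 ler_pdivlMr // mulrC lerBrDr -lerBrDl.
  exact: sufficient_decrease.
split=> //.
have lower_cvg : (fun k => Fv (s k).+1 - M * D (s k)) @ \oo --> Wlim.
  rewrite -[Wlim]subr0 -(mulr0 M).
  by apply: cvgB => //; apply: cvgM => //; exact: cvg_cst.
apply: (squeeze_cvgr _ lower_cvg W_s); near=> k.
have T0_le : (T0 <= s k)%N by near: k.
rewrite lerBlDr bounded_increase //=.
by apply: window_le => //; apply/andP; split; lia.
Unshelve. all: by end_near.
Qed.

Lemma nonmonotone_descent_cvg0 : D @ \oo --> 0.
Proof.
have argmax t : exists i, (T0 <= t)%N -> (t.+1 - r <= i <= t)%N /\ Fv i = W t.
  have [/window_attained[i i_win Fv_i]|t_lt] := leqP T0 t; first by exists i.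
  by exists 0%N => T0_le; lia.
have [a a_win] := choice argmax.
have a_ge t : (T0 <= t)%N -> (t.+1 - r <= a t)%N by move=> /a_win[/andP[]].
have a_oo : a @ \oo --> \oo.
  move=> A [N _ A_N]; exists (N + r + T0)%N => // t /= t_ge; apply: A_N => /=.
  by have := a_ge t (leq_trans (leq_addl _ _) t_ge); lia.
have a_shift_oo j : (fun t => a t - j)%N @ \oo --> \oo := cvg_comp _ _ a_oo (cvg_subnr j).
have a_subSK j : \forall t \near \oo, (a t - j.+1).+1 = (a t - j)%N.
  near=> t; suff : (j.+1 <= a t)%N by lia.
  by near: t; exact: a_oo _ (nbhs_infty_ge _).
have next_cvg j : (fun t => Fv (a t - j)%N) @ \oo --> Wlim ->
    (fun t => Fv (a t - j.+1).+1) @ \oo --> Wlim.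
  move=> Fv_j; apply: cvg_trans (near_eq_cvg _) Fv_j; near=> t.
  by have -> : (a t - j.+1).+1 = (a t - j)%N by near: t.
(* By induction on j, F tends to lim W along the indices a t - j; every index t
   has the form a (t + r) - j.+1 with j < r. *)
have Fv_back j : (fun t => Fv (a t - j)%N) @ \oo --> Wlim.
  elim: j => [|j IH]; last exact: (window_step_back (a_shift_oo j.+1) (next_cvg j IH)).2.
  apply: cvg_trans (near_eq_cvg _) window_max_cvg; near=> t.
  have T0_le : (T0 <= t)%N by near: t; exact: nbhs_infty_ge.
  by rewrite subn0 (a_win t T0_le).2.
have D_back j : (fun t => D (a t - j.+1)%N) @ \oo --> 0.
  exact: (window_step_back (a_shift_oo j.+1) (next_cvg j (Fv_back j))).1.
apply/cvgrPdist_lt => e e_gt0.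
have D_small : \forall t \near \oo, forall j : 'I_r, D (a t - j.+1)%N < e.
  by apply: filter_forall => j; exact: cvgr_lt (D_back j) _ e_gt0.
have D_small_shift : \forall t \near \oo, forall j : 'I_r, D (a (t + r) - j.+1)%N < e.
  exact: cvg_addnr r _ D_small.
near=> t; have T0_le : (T0 <= t + r)%N.
  by apply: (@leq_trans t); [near: t; exact: nbhs_infty_ge | exact: leq_addr].
have [/andP[a_lo a_hi] _] := a_win _ T0_le.
have j_lt : (a (t + r) - t.+1 < r)%N by lia.
have D_t : forall j : 'I_r, D (a (t + r) - j.+1)%N < e by near: t.
have := D_t (Ordinal j_lt).
rewrite /= (_ : (a (t + r) - (a (t + r) - t.+1).+1)%N = t); last by lia.
by rewrite sub0r normrN ger0_norm.
Unshelve. all: by end_near.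
Qed.
End NonmonotoneDescent.

Lemma bigmaxe_nat_attained (R : realDomainType) (e : nat -> \bar R) (a b : nat) :
  (a < b)%N -> exists2 i, (a <= i < b)%N & \big[maxe/-oo%E]_(a <= j < b) e j = e i.
Proof.
elim: b => // b IH; rewrite ltnS leq_eqVlt => /orP[/eqP <-|a_lt_b].
  by exists a; [rewrite leqnn ltnSn | rewrite big_nat1].
have [i i_win big_i] := IH a_lt_b.
rewrite big_nat_recr 1?ltnW //= big_i maxEle.
case: ifP => _; [exists b | exists i] => //; move: i_win; lia.
Qed.

Lemma clip_iterate_bounds (R : realType) (lo hi : R) (e : nat -> R) :
  lo <= hi -> e 0%N = 1 -> (forall t, exists a, e t.+1 = clip lo hi a) ->
  forall t, Num.min 1 lo <= e t <= Num.max 1 hi.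
Proof.
move=> lo_hi e0 e_clip [|t]; first by rewrite e0 ge_min lexx le_max lexx.
have [a ->] := e_clip t.
have lo_le : lo <= clip lo hi a by rewrite /clip le_min lo_hi le_max lexx.
have le_hi : clip lo hi a <= hi by rewrite /clip ge_min lexx.
by rewrite ge_min lo_le orbT le_max le_hi orbT.
Qed.

Lemma expr_unbounded (R : realType) (rho K : R) : 1 < rho -> \forall l \near \oo, K <= rho ^+ l.
Proof.
move=> rho_gt1; have rho_gt0 : 0 < rho := lt_trans ltr01 rho_gt1.
have K'_gt0 : 0 < Num.max 1 K by rewrite lt_max ltr01.
have K'inv_gt0 : 0 < (Num.max 1 K)^-1 by rewrite invr_gt0.
have rho_inv_cvg : (fun l => rho^-1 ^+ l) @ \oo --> 0.
  by apply: cvg_expr; rewrite gtr0_norm ?invr_gt0 // invf_lt1.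
near=> l; have : rho^-1 ^+ l < (Num.max 1 K)^-1.
  by near: l; exact: cvgr_lt rho_inv_cvg _ K'inv_gt0.
rewrite exprVn ltf_pV2 ?posrE ?exprn_gt0 // => /ltW; apply: le_trans.
by rewrite le_max lexx orbT.
Unshelve. all: by end_near.
Qed.

Lemma increasing_pred_index (phi : nat -> nat) : (forall k, (phi k < phi k.+1)%N) ->
  exists2 s : nat -> nat, s @ \oo --> \oo & \forall k \near \oo, (s k).+1 = phi k.
Proof.
move=> phi_incr; have phi_ge k : (k <= phi k)%N.
  by elim: k => // k IH; exact: leq_ltn_trans IH (phi_incr k).
exists (fun k => (phi k).-1).
  by move=> A [n _ A_n]; exists n.+1 => // k /= n_lt; apply: A_n => /=; have := phi_ge k; lia.
by near=> k; rewrite prednK // (leq_trans _ (phi_ge k)) //; near: k; exact: nbhs_infty_ge.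
Unshelve. all: by end_near.
Qed.

Lemma cvg_subseq_steps (K : numFieldType) (V : normedModType K) (u : nat -> V)
    (phi s : nat -> nat) (a : V) :
  s @ \oo --> \oo -> (\forall k \near \oo, (s k).+1 = phi k) ->
  (fun t => u t.+1 - u t) @ \oo --> (0 : V) -> (fun k => u (phi k)) @ \oo --> a ->
  (fun k => u (s k).+1) @ \oo --> a /\ (fun k => u (s k)) @ \oo --> a.
Proof.
move=> s_oo sS du_cvg0 u_phi.
have u_next : (fun k => u (s k).+1) @ \oo --> a.
  apply: cvg_trans (near_eq_cvg _) u_phi; near=> k.
  by have -> : (s k).+1 = phi k by near: k.
split=> //; rewrite -[a]subr0.
have -> : (fun k => u (s k)) = (fun k => u (s k).+1 - (u (s k).+1 - u (s k))).
  by apply: funext => k; rewrite opprB addrC subrK.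
by apply: cvgB => //; exact: cvg_comp _ _ s_oo du_cvg0.
Unshelve. all: by end_near.
Qed.

Section GPALM.
Variables (R : realType) (p N : nat) (f : 'rV[R]_p * 'rV[R]_N -> R).
Variables (gx : 'rV[R]_p -> 'rV[R]_N -> 'rV[R]_p) (gz : 'rV[R]_p -> 'rV[R]_N -> 'rV[R]_N).
Variables (g : 'rV[R]_p -> \bar R) (h : 'rV[R]_N -> \bar R) (M : R).
Variables (r : nat) (rho1 rho2 sigma1 sigma2 etalo etahi : R).
Variables (x : nat -> 'rV[R]_p) (z : nat -> 'rV[R]_N) (ehx ehz : nat -> R).
Variables (L : nat -> nat) (xtr : nat -> nat -> 'rV[R]_p) (ztr : nat -> nat -> 'rV[R]_N).
Hypothesis f_diff : forall u v, differentiable f (u, v).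
Hypothesis f_grad : forall u v du dv,
  'd f (u, v) (du, dv) = dotv (gx u v) du + dotv (gz u v) dv.
Hypothesis M_gt0 : 0 < M.
Hypothesis grad_lip : forall u1 v1 u2 v2,
  enorm2 (gx u1 v1 - gx u2 v2) (gz u1 v1 - gz u2 v2) <= M * enorm2 (u1 - u2) (v1 - v2).
Hypotheses (Pg : proper_fun g) (Ph : proper_fun h).
Hypothesis F_lb : exists c : R, forall u v, (c%:E <= objective f g h u v)%E.
Hypothesis r_ge1 : (1 <= r)%N.
Hypotheses (rho1_gt1 : 1 < rho1) (rho2_gt1 : 1 < rho2).
Hypotheses (sigma1_01 : 0 < sigma1 < 1) (sigma2_01 : 0 < sigma2 < 1).
Hypotheses (etalo_gt0 : 0 < etalo) (etalo_le : etalo <= etahi).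
Hypothesis run : GPALM_run gx gz g h (objective f g h) r rho1 rho2 sigma1 sigma2 etalo etahi
  x z ehx ehz L xtr ztr.

Local Notation F := (objective f g h).
Local Notation etx t l := (rho1 ^+ l * ehx t).
Local Notation etz t l := (rho2 ^+ l * ehz t).
(* The initial values ehx 0 = ehz 0 = 1 need not lie in [etalo, etahi]. *)
Let eta_min := Num.min 1 etalo.
Let eta_max := Num.max 1 etahi.

Lemma eta_min_gt0 : 0 < eta_min.
Proof. by rewrite lt_min ltr01 etalo_gt0. Qed.

Lemma eta_hat_bounds t : eta_min <= ehx t <= eta_max /\ eta_min <= ehz t <= eta_max.
Proof.
have [[ehx0 ehz0] [_ _ _ _ eta_hat]] := run.
split; apply: clip_iterate_bounds => // s.
- by exists (dotv (x s.+1 - x s) (gx (x s.+1) (z s.+1) - gx (x s) (z s)) / sqn (x s.+1 - x s));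
    rewrite (eta_hat s).1.
- by exists (dotv (z s.+1 - z s) (gz (x s.+1) (z s.+1) - gz (x s.+1) (z s)) / sqn (z s.+1 - z s));
    rewrite (eta_hat s).2.
Qed.

Lemma step_params_ge t l : eta_min <= etx t l /\ eta_min <= etz t l.
Proof.
have [/andP[ehx_ge _] /andP[ehz_ge _]] := eta_hat_bounds t.
have eta_min_ge0 := ltW eta_min_gt0.
by split; rewrite -[eta_min]mul1r ler_pM // exprn_ege1 // ltW.
Qed.

Lemma step_params_gt0 t l : 0 < etx t l /\ 0 < etz t l.
Proof. by have [? ?] := step_params_ge t l; split; apply: lt_le_trans eta_min_gt0 _. Qed.

Lemma trial_prox t l : (l <= L t)%N ->
  in_prox g (etx t l) (x t - (etx t l)^-1 *: gx (x t) (z t)) (xtr t l) /\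
  in_prox h (etz t l) (z t - (etz t l)^-1 *: gz (xtr t l) (z t)) (ztr t l).
Proof. by have [_ [trial _ _ _ _]] := run; exact: trial. Qed.

Lemma gpalm_prox t :
  in_prox g (etx t (L t)) (x t - (etx t (L t))^-1 *: gx (x t) (z t)) (x t.+1) /\
  in_prox h (etz t (L t)) (z t - (etz t (L t))^-1 *: gz (x t.+1) (z t)) (z t.+1).
Proof. by have [_ [_ _ _ next _]] := run; have [-> ->] := next t; exact: trial_prox. Qed.

Lemma iterate_fin_num t : (1 <= t)%N -> g (x t) \is a fin_num /\ h (z t) \is a fin_num.
Proof.
case: t => // t _; have [prox_x prox_z] := gpalm_prox t.
have [etx_gt0 etz_gt0] := step_params_gt0 t (L t).
by split; [exact: in_prox_fin_num Pg etx_gt0 prox_x | exact: in_prox_fin_num Ph etz_gt0 prox_z].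
Qed.

Lemma objective_iterate_fin t : (1 <= t)%N -> F (x t) (z t) \is a fin_num.
Proof. by move=> /iterate_fin_num[g_fin h_fin]; rewrite objective_fin. Qed.

Lemma trial_decrease t l : (1 <= t)%N -> (l <= L t)%N ->
  (F (xtr t l) (ztr t l) <= F (x t) (z t)
     - ((etx t l / 2 - M) * sqn (xtr t l - x t))%:E
     - ((etz t l / 2 - M) * sqn (ztr t l - z t))%:E)%E.
Proof.
move=> /iterate_fin_num[g_fin h_fin] /trial_prox[prox_x prox_z].
have [etx_gt0 etz_gt0] := step_params_gt0 t l.
by have := palm_step_decrease f_diff f_grad M_gt0 grad_lip Pg Ph etx_gt0 etz_gt0
  g_fin h_fin prox_x prox_z.
Qed.

Lemma nm_ref_ge t i : (t.+1 - r <= i <= t)%N -> (F (x i) (z i) <= nm_ref F x z r t)%E.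
Proof.
move=> i_win; rewrite /nm_ref (big_rem i) /=; first by rewrite le_max lexx.
by rewrite mem_index_iota; lia.
Qed.

Lemma nm_ref_attained t :
  exists2 i, (t.+1 - r <= i <= t)%N & nm_ref F x z r t = F (x i) (z i).
Proof.
have window_ne : (t.+1 - r < t.+1)%N by lia.
have [i i_win nm_i] := bigmaxe_nat_attained (fun i => F (x i) (z i)) window_ne.
by exists i => //; lia.
Qed.

Lemma gpalm_test_large_params t l : (1 <= t)%N -> (l <= L t)%N ->
  2 * M <= etx t l * (1 - sigma1) -> 2 * M <= etz t l * (1 - sigma2) ->
  gpalm_test F x z r t sigma1 sigma2 (etx t l) (etz t l) (xtr t l) (ztr t l).
Proof.
move=> t_ge1 l_le etx_big etz_big; apply: le_trans (trial_decrease t_ge1 l_le) _.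
apply: le_trans (leeB (leeB (nm_ref_ge (_ : t.+1 - r <= t <= t)%N) (lexx _)) (lexx _)).
  rewrite -(fineK (objective_iterate_fin t_ge1)) -!EFinB lee_fin.
  rewrite -subr_ge0 in etx_big; rewrite -subr_ge0 in etz_big.
  have := mulr_ge0 etx_big (sqn_ge0 (xtr t l - x t)).
  have := mulr_ge0 etz_big (sqn_ge0 (ztr t l - z t)).
  lra.
by lia.
Qed.

Lemma line_search_bounded : exists l0, forall t, (1 <= t)%N -> (L t <= l0)%N.
Proof.
have big_enough q e s : 0 < 1 - s -> 2 * M / (eta_min * (1 - s)) <= q ->
    eta_min <= e -> 2 * M <= q * e * (1 - s).
  move=> s_lt1 K_le e_ge; have eta_min_gt0 := eta_min_gt0.
  have den_gt0 : 0 < eta_min * (1 - s) by rewrite mulr_gt0.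
  have two_M_ge0 : 0 <= 2 * M by rewrite mulr_ge0 // ltW.
  have q_ge0 : 0 <= q := le_trans (divr_ge0 two_M_ge0 (ltW den_gt0)) K_le.
  rewrite -mulrA; apply: le_trans (_ : q * (eta_min * (1 - s)) <= _).
    by rewrite -ler_pdivrMr.
  by apply: ler_wpM2l => //; apply: ler_wpM2r => //; exact: ltW.
have [l0 [rho1_big rho2_big]] := filter_ex (filterI
  (expr_unbounded (2 * M / (eta_min * (1 - sigma1))) rho1_gt1)
  (expr_unbounded (2 * M / (eta_min * (1 - sigma2))) rho2_gt1)).
exists l0 => t t_ge1; rewrite leqNgt; apply/negP => l0_lt.
have [_ [_ fail _ _ _]] := run; apply: (fail t l0 l0_lt).
have [ehx_ge ehz_ge] : eta_min <= ehx t /\ eta_min <= ehz t.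
  by have [/andP[? _] /andP[? _]] := eta_hat_bounds t.
apply: gpalm_test_large_params => //; [exact: ltnW | |]; apply: big_enough => //; rewrite subr_gt0.
- by case/andP: sigma1_01.
- by case/andP: sigma2_01.
Qed.

Lemma step_params_bounded :
  exists E, \forall t \near \oo, etx t (L t) <= E /\ etz t (L t) <= E.
Proof.
have [l0 L_le] := line_search_bounded.
exists ((rho1 ^+ l0 + rho2 ^+ l0) * eta_max); near=> t.
have t_ge1 : (1 <= t)%N by near: t; exact: nbhs_infty_ge.
have [/andP[ehx_ge ehx_le] /andP[ehz_ge ehz_le]] := eta_hat_bounds t.
have ehat_ge0 : 0 <= eta_min := ltW eta_min_gt0.
have rho_le (rho : R) : 1 < rho -> rho ^+ L t <= rho ^+ l0.
  by move=> /ltW/ler_weXn2l; apply; exact: L_le.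
have pow_ge0 (rho : R) l : 1 < rho -> 0 <= rho ^+ l.
  by move=> rho_gt1; rewrite exprn_ge0 // ltW // (lt_trans ltr01 rho_gt1).
split; apply: ler_pM; rewrite ?pow_ge0 ?(le_trans ehat_ge0) //.
- by rewrite (le_trans (rho_le _ rho1_gt1)) // lerDl pow_ge0.
- by rewrite (le_trans (rho_le _ rho2_gt1)) // lerDr pow_ge0.
Unshelve. all: by end_near.
Qed.

Let Fr t := fine (F (x t) (z t)).
Let Wr t := fine (nm_ref F x z r t).
Let steps t := sqn (x t.+1 - x t) + sqn (z t.+1 - z t).

Lemma FrE t : (1 <= t)%N -> F (x t) (z t) = (Fr t)%:E.
Proof. by move=> /objective_iterate_fin /fineK. Qed.

Lemma WrE t : (r <= t)%N -> nm_ref F x z r t = (Wr t)%:E.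
Proof.
have [i i_win nm_i] := nm_ref_attained t => r_le_t.
by rewrite /Wr nm_i FrE //; lia.
Qed.

Lemma steps_sqn_cvg0 : steps @ \oo --> 0.
Proof.
have [c0 F_ge] := F_lb; have [_ [_ _ test next _]] := run.
have [[sigma1_gt0 _] [sigma2_gt0 _]] := (andP sigma1_01, andP sigma2_01).
pose c := eta_min * Num.min sigma1 sigma2 / 2.
have c_gt0 : 0 < c by rewrite !mulr_gt0 ?eta_min_gt0 ?invr_gt0 // lt_min sigma1_gt0.
apply: (@nonmonotone_descent_cvg0 R Fr Wr steps r r c M c0) => //
  [t r_le_t i i_win|t r_le_t|t r_le_t|t r_le_t|t|t r_le_t].
- have i_ge1 : (1 <= i)%N by lia.
  by rewrite -lee_fin -FrE // -WrE //; exact: nm_ref_ge.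
- by have [i i_win nm_i] := nm_ref_attained t; exists i => //; rewrite /Wr nm_i.
- have := test t; rewrite /gpalm_test FrE // WrE // -!EFinB lee_fin.
  have [etx_ge etz_ge] := step_params_ge t (L t).
  have min_le1 : Num.min sigma1 sigma2 <= sigma1 by rewrite ge_min lexx.
  have min_le2 : Num.min sigma1 sigma2 <= sigma2 by rewrite ge_min lexx orbT.
  have min_ge0 : 0 <= Num.min sigma1 sigma2 by rewrite le_min !ltW.
  have c_le1 : c <= sigma1 / 2 * etx t (L t).
    by have := ler_pM (ltW eta_min_gt0) min_ge0 etx_ge min_le1; rewrite /c; lra.
  have c_le2 : c <= sigma2 / 2 * etz t (L t).
    by have := ler_pM (ltW eta_min_gt0) min_ge0 etz_ge min_le2; rewrite /c; lra.
  have := ler_wpM2r (sqn_ge0 (x t.+1 - x t)) c_le1.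
  have := ler_wpM2r (sqn_ge0 (z t.+1 - z t)) c_le2.
  rewrite /steps; lra.
- have t_ge1 : (1 <= t)%N by lia.
  have := trial_decrease t_ge1 (leqnn (L t)).
  rewrite -(next t).1 -(next t).2 !FrE // -!EFinB lee_fin.
  have [etx_gt0 etz_gt0] := step_params_gt0 t (L t).
  have : 0 <= etx t (L t) / 2 * sqn (x t.+1 - x t) by rewrite mulr_ge0 ?sqn_ge0 ?divr_ge0 ?ltW.
  have : 0 <= etz t (L t) / 2 * sqn (z t.+1 - z t) by rewrite mulr_ge0 ?sqn_ge0 ?divr_ge0 ?ltW.
  rewrite /steps !mulrBl; lra.
- by rewrite /steps addr_ge0 ?sqn_ge0.
- have t_ge1 : (1 <= t)%N by lia.
  by rewrite -lee_fin -FrE.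
Qed.

Lemma gpalm_steps_cvg0 :
  (fun t => x t.+1 - x t) @ \oo --> (0 : 'rV[R]_p) /\
  (fun t => z t.+1 - z t) @ \oo --> (0 : 'rV[R]_N).
Proof.
split; apply/cvg_sqnB0P; apply: (squeeze_cvgr _ (cvg_cst 0) steps_sqn_cvg0);
  near=> t; rewrite subr0 sqn_ge0 /steps /=; [rewrite lerDl | rewrite lerDr]; exact: sqn_ge0.
Unshelve. all: by end_near.
Qed.

End GPALM.

Unset Implicit Arguments. Set Strict Implicit.

Theorem theorem3 (R : realType) (p N : nat)
  (f : 'rV[R]_p * 'rV[R]_N -> R)
  (gx : 'rV[R]_p -> 'rV[R]_N -> 'rV[R]_p) (gz : 'rV[R]_p -> 'rV[R]_N -> 'rV[R]_N)
  (g : 'rV[R]_p -> \bar R) (h : 'rV[R]_N -> \bar R) (M : R)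
  (r : nat) (rho1 rho2 sigma1 sigma2 etalo etahi : R)
  (x : nat -> 'rV[R]_p) (z : nat -> 'rV[R]_N) (ehx ehz : nat -> R)
  (L : nat -> nat) (xtr : nat -> nat -> 'rV[R]_p) (ztr : nat -> nat -> 'rV[R]_N)
  (xs : 'rV[R]_p) (zs : 'rV[R]_N) :
  let F : 'rV[R]_p -> 'rV[R]_N -> \bar R :=
    fun u v => ((f (u, v))%:E + g u + h v)%E in
  (* (i) f differentiable, gradient (gx, gz), M-Lipschitz jointly *)
  (forall u v, differentiable f (u, v)) ->
  (forall u v du dv,
      'd f (u, v) (du, dv) = dotv (gx u v) du + dotv (gz u v) dv) ->
  0 < M ->
  (forall u1 v1 u2 v2,
      enorm2 (gx u1 v1 - gx u2 v2) (gz u1 v1 - gz u2 v2)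
      <= M * enorm2 (u1 - u2) (v1 - v2)) ->
  proper_fun g -> proper_fun h ->
  lower_semicontinuous g -> lower_semicontinuous h ->
  dir_differentiable g -> dir_differentiable h ->
  (* (ii) F bounded below *)
  (exists c : R, forall u v, (c%:E <= F u v)%E) ->
  (* (iii) prox-boundedness *)
  (exists eta : R, 0 < eta /\ prox_bounded_with g eta /\ prox_bounded_with h eta) ->
  (* algorithm parameters *)
  (1 <= r)%N -> 1 < rho1 -> 1 < rho2 ->
  0 < sigma1 < 1 -> 0 < sigma2 < 1 ->
  0 < etalo -> etalo <= etahi ->
  (* the sequence is generated by GPALM *)
  GPALM_run gx gz g h F r rho1 rho2 sigma1 sigma2 etalo etahi
    x z ehx ehz L xtr ztr ->
  (* the sequence is bounded *)
  (exists B : R, forall t, enorm2 (x t) (z t) <= B) ->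
  (* F is continuous on a compact set containing the sequence *)
  (exists K : set ('rV[R]_p * 'rV[R]_N),
      compact K /\ (forall t, K (x t, z t)) /\
      {within K, continuous (fun w : 'rV[R]_p * 'rV[R]_N => F w.1 w.2)}) ->
  (* (xs, zs) is an accumulation point *)
  (exists phi : nat -> nat, (forall k, (phi k < phi k.+1)%N) /\
      (fun k => (x (phi k), z (phi k))) @ \oo --> (xs, zs)) ->
  d_stationary F xs zs.
Proof.
move=> F f_diff f_grad M_gt0 grad_lip Pg Ph lsc_g lsc_h dd_g dd_h F_lb _ r_ge1
  rho1_gt1 rho2_gt1 sigma1_01 sigma2_01 etalo_gt0 etalo_le run _ _ [phi [phi_incr xz_phi]].
have [dx_cvg0 dz_cvg0] := gpalm_steps_cvg0 f_diff f_grad M_gt0 grad_lip Pg Ph F_lb r_ge1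
  rho1_gt1 rho2_gt1 sigma1_01 sigma2_01 etalo_gt0 etalo_le run.
have [E params_le] := step_params_bounded f_diff f_grad M_gt0 grad_lip Pg Ph r_ge1
  rho1_gt1 rho2_gt1 sigma1_01 sigma2_01 etalo_gt0 etalo_le run.
have params_gt0 := step_params_gt0 rho1_gt1 rho2_gt1 etalo_gt0 etalo_le run.
have [s s_oo sS] := increasing_pred_index phi_incr.
have [x_next x_prev] := cvg_subseq_steps s_oo sS dx_cvg0 (cvg_comp _ _ xz_phi cvg_fst).
have [z_next z_prev] := cvg_subseq_steps s_oo sS dz_cvg0 (cvg_comp _ _ xz_phi cvg_snd).
exact: (limit_point_d_stationary f_diff f_grad M_gt0 grad_lip Pg Ph lsc_g lsc_h dd_g dd_h
  (fun k => (params_gt0 (s k) (L (s k))).1) (fun k => (params_gt0 (s k) (L (s k))).2)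
  (s_oo _ params_le) (fun k => (gpalm_prox run (s k)).1) (fun k => (gpalm_prox run (s k)).2)
  x_next z_next x_prev z_prev).
Qed.
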